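(* Let $\mathcal{G}\subset\mathcal{S}$ with harmonic analogue $\mathcal{G}_H^0$, and let $\mathcal{O}\subset\mathcal{A}$ be such that $\varphi*F\in\mathcal{G}$ for all $F\in\mathcal{G}$ and $\varphi\in\mathcal{O}$. Then $\varphi\,\tilde{*}\,f\in\mathcal{G}_H^0$ for all $\varphi\in\mathcal{O}$ and $f\in\mathcal{G}_H^0$.
   Context: $\mathbb{D}$ is the open unit disk. $\mathcal{A}$ is the class of analytic $f$ in $\mathbb{D}$ with $f(0)=0$, $f'(0)=1$, and $\mathcal{S}\subset\mathcal{A}$ the univalent ones. For $\mathcal{G}\subset\mathcal{S}$, its harmonic analogue $\mathcal{G}_H^0$ is the class of harmonic functions $f=h+\bar g$ ($h,g$ analytic in $\mathbb{D}$) such that $h+\epsilon g\in\mathcal{G}$ for every $|\epsilon|=1$. For analytic $f(z)=\sum a_nz^n$, $F(z)=\sum A_nz^n$, $(f*F)(z)=\sum a_nA_nz^n$. For harmonic $f=h+\bar g$ and analytic $\varphi$, $f\,\tilde{*}\,\varphi=\varphi\,\tilde{*}\,f=h*\varphi+\overline{g*\varphi}$. *)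

From Stdlib Require Import Reals.
From Coquelicot Require Import Coquelicot.
Open Scope R_scope.

(* An analytic function on the unit disk D is represented by its Taylor
   coefficient sequence a : nat -> C, f(z) = sum_n a n z^n. *)
Definition coefs := nat -> C.

Definition cpow (z : C) (n : nat) : C := pow_n (K := C_Ring) z n.

Definition analytic_disk (a : coefs) : Prop :=
  forall z : C, Cmod z < 1 -> ex_series (fun n => Cmult (a n) (cpow z n)).

Definition has_value (a : coefs) (z v : C) : Prop :=
  is_series (fun n => Cmult (a n) (cpow z n)) v.

Definition classA (a : coefs) : Prop :=
  analytic_disk a /\ a 0%nat = RtoC 0 /\ a 1%nat = RtoC 1.

Definition univalent (a : coefs) : Prop :=
  forall z w v : C, Cmod z < 1 -> Cmod w < 1 ->
    has_value a z v -> has_value a w v -> z = w.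

Definition classS (a : coefs) : Prop := classA a /\ univalent a.

Definition hadamard (a b : coefs) : coefs := fun n => Cmult (a n) (b n).

Definition add_scal (h : coefs) (eps : C) (g : coefs) : coefs :=
  fun n => Cplus (h n) (Cmult eps (g n)).

(* A harmonic function f = h + conj g is represented by the pair (h, g). *)
Definition harm := (coefs * coefs)%type.

Definition harmonic_analogue (G : coefs -> Prop) (f : harm) : Prop :=
  analytic_disk (fst f) /\ analytic_disk (snd f) /\
  forall eps : C, Cmod eps = 1 -> G (add_scal (fst f) eps (snd f)).

Definition harm_conv (phi : coefs) (f : harm) : harm :=
  (hadamard (fst f) phi, hadamard (snd f) phi).

From Stdlib Require Import Reals FunctionalExtensionality.
From Coquelicot Require Import Coquelicot.

(* The Hadamard product with phi commutes with forming h + eps g, so each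
   h * phi + eps (g * phi) lies in G by the hypothesis on O.  Analyticity of
   h * phi and g * phi follows from that of their sum and difference
   (eps = 1 and eps = -1), which lie in G and hence in S. *)

Lemma add_scal_hadamard (h g phi : coefs) (eps : C) :
  add_scal (hadamard h phi) eps (hadamard g phi) = hadamard phi (add_scal h eps g).
Proof.
  apply functional_extensionality; intro n.
  unfold add_scal, hadamard; apply injective_projections; simpl; ring.
Qed.

Lemma analytic_disk_lincomb (u v : coefs) (a b : C) :
  analytic_disk u -> analytic_disk v ->
  analytic_disk (fun n => Cplus (Cmult a (u n)) (Cmult b (v n))).
Proof.
  intros Hu Hv z Hz.
  eapply ex_series_ext;
    [|apply (ex_series_plus (K:=C_AbsRing) (V:=C_NormedModule));
      [apply (ex_series_scal (K:=C_AbsRing) (V:=C_NormedModule) a _ (Hu z Hz))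
      |apply (ex_series_scal (K:=C_AbsRing) (V:=C_NormedModule) b _ (Hv z Hz))]].
  intro n; apply injective_projections; simpl; ring.
Qed.

Lemma analytic_disk_of_sum_diff (h g : coefs) :
  analytic_disk (add_scal h (RtoC 1) g) ->
  analytic_disk (add_scal h (Copp (RtoC 1)) g) ->
  analytic_disk h /\ analytic_disk g.
Proof.
  intros Hsum Hdiff.
  pose proof (analytic_disk_lincomb _ _ (RtoC (/2)) (RtoC (/2)) Hsum Hdiff) as Hh.
  pose proof (analytic_disk_lincomb _ _ (RtoC (/2)) (RtoC (-/2)) Hsum Hdiff) as Hg.
  split; intros z Hz.
  - eapply ex_series_ext; [|exact (Hh z Hz)].
    intro n; unfold add_scal; apply injective_projections; simpl; field.
  - eapply ex_series_ext; [|exact (Hg z Hz)].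
    intro n; unfold add_scal; apply injective_projections; simpl; field.
Qed.

Lemma Cmod_opp_1 : Cmod (Copp (RtoC 1)) = 1.
Proof. rewrite Cmod_opp; apply Cmod_1. Qed.

Theorem theorem2p11 (G O : coefs -> Prop)
  (HGS : forall F, G F -> classS F)
  (HOA : forall phi, O phi -> classA phi)
  (HO : forall phi F, O phi -> G F -> G (hadamard phi F)) :
  forall (phi : coefs) (f : harm),
    O phi -> harmonic_analogue G f -> harmonic_analogue G (harm_conv phi f).
Proof.
  intros phi [h g] Hphi [_ [_ HG]]; simpl in HG.
  assert (Hconv : forall eps, Cmod eps = 1 ->
            G (add_scal (hadamard h phi) eps (hadamard g phi))).
  { intros eps Heps; rewrite add_scal_hadamard; exact (HO _ _ Hphi (HG eps Heps)). }
  assert (Hanalytic : forall eps, Cmod eps = 1 ->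
            analytic_disk (add_scal (hadamard h phi) eps (hadamard g phi))).
  { intros eps Heps; apply (HGS _ (Hconv eps Heps)). }
  destruct (analytic_disk_of_sum_diff _ _ (Hanalytic _ Cmod_1) (Hanalytic _ Cmod_opp_1))
    as [Hh Hg].
  exact (conj Hh (conj Hg Hconv)).
Qed.
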